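(* Let $F\in\mathcal{B}((\mathbb{C}^2)^{\otimes d})$ with $\|F\|\leq 1$, and fix $s_0\leq n-2$. Then \[ \big|\langle\psi_{s}|(F\otimes I^{\otimes n-d})|\psi_{s}\rangle-\langle\psi_{r}|(F\otimes I^{\otimes n-d})|\psi_{r}\rangle\big|=O\big(\sqrt{d s_0/n}\big)\qquad\text{for all } r,s\leq s_0, \] where the $O$-notation refers to $n\to\infty$.
   Context: On $n$ qubits, let $\omega=e^{2\pi i/n}$, $\sigma_m^-=|0\rangle\langle1|$ on qubit $m$, $S_-=\sum_{m=1}^n\sigma_m^-$, $|\Psi\rangle=\overline{\omega}\sum_{m=1}^n\omega^m\sigma_m^-|1\rangle^{\otimes n}$, and for $s=0,\dots,n-2$, $|\psi_s\rangle=S_-^s|\Psi\rangle/\|S_-^s|\Psi\rangle\|$. $F\otimes I^{\otimes(n-d)}$ acts as $F$ on the first $d$ qubits. *)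

From HB Require Import structures.
From mathcomp Require Import all_boot all_order all_algebra.
From mathcomp Require Import all_classical all_reals all_analysis.
From mathcomp Require Import complex.
Set Implicit Arguments. Unset Strict Implicit. Unset Printing Implicit Defensive.
Import Order.TTheory GRing.Theory Num.Theory.
Local Open Scope ring_scope.

(* Qubit basis label true = |1>, false = |0>.
   n-qubit basis states are bit strings {ffun 'I_n -> bool}; qubit m
   (1-based in the paper) is index m-1 : 'I_n. *)

Section QDefs.
Variable R : realType.
Local Notation C := (R[i]).

Definition cabs2 (z : C) : R := complex.Re z ^+ 2 + complex.Im z ^+ 2.
Definition cmod (z : C) : R := Num.sqrt (cabs2 z).
Definition cconj (z : C) : C := Complex (complex.Re z) (- complex.Im z).

Definition bits (n : nat) := {ffun 'I_n -> bool}.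
Definition qvec (n : nat) := bits n -> C.
Definition qop (n : nat) := bits n -> bits n -> C.   (* matrix entries <x|A|y> *)

Definition omega (n : nat) : C :=
  Complex (cos (2 * pi / n%:R)) (sin (2 * pi / n%:R)).

Definition setbit n (x : bits n) (m : 'I_n) (b : bool) : bits n :=
  [ffun j => if j == m then b else x j].

(* sigma_m^- = |0><1| on qubit m *)
Definition sigma_minus n (m : 'I_n) (v : qvec n) : qvec n :=
  fun y => if y m then 0 else v (setbit y m true).

Definition S_minus n (v : qvec n) : qvec n :=
  fun y => \sum_(m < n) sigma_minus m v y.

Definition all_ones n : qvec n := fun y => if y == [ffun => true] then 1 else 0.

(* |Psi> = conj(omega) sum_{m=1}^n omega^m sigma_m^- |1...1>,
   with paper's qubit m = index m-1 *)
Definition Psi n : qvec n :=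
  fun y => cconj (omega n) *
           \sum_(m < n) omega n ^+ (m.+1) * sigma_minus m (@all_ones n) y.

Definition vnorm n (v : qvec n) : R := Num.sqrt (\sum_(y : bits n) cabs2 (v y)).

Definition vscale n (a : C) (v : qvec n) : qvec n := fun y => a * v y.

Definition psi n (s : nat) : qvec n :=
  let w := iter s (@S_minus n) (@Psi n) in
  vscale (Complex (vnorm w)^-1 0) w.

Definition apply_op n (A : qop n) (v : qvec n) : qvec n :=
  fun x => \sum_(y : bits n) A x y * v y.

Definition expect n (A : qop n) (v : qvec n) : C :=
  \sum_(x : bits n) \sum_(y : bits n) cconj (v x) * A x y * v y.

(* ||F|| <= 1 for the operator norm: ||F v|| <= ||v|| for all v *)
Definition op_norm_le1 d (F : qop d) : Prop :=
  forall v : qvec d, vnorm (apply_op F v) <= vnorm v.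

Definition restr n d (x : bits n) : bits d :=
  [ffun i : 'I_d => if insub (val i) is Some j then x (j : 'I_n) else false].

(* F (x) I^{(x)(n-d)}: F on the first d qubits, identity on qubits d..n-1 *)
Definition tensor_id n d (F : qop d) : qop n :=
  fun x y => if [forall j : 'I_n, (d <= j)%N ==> (x j == y j)]
             then F (restr d x) (restr d y) else 0.

End QDefs.

From HB Require Import structures.
From mathcomp Require Import all_boot all_order all_algebra.
From mathcomp Require Import all_classical all_reals all_analysis.
From mathcomp Require Import complex.
From mathcomp Require Import ring lra zify.
Set Implicit Arguments. Unset Strict Implicit. Unset Printing Implicit Defensive.
Import Order.TTheory GRing.Theory Num.Theory.
Local Open Scope ring_scope.
Local Open Scope complex_scope.

(** Every expectation is compared with the corner entry [F 1..1 1..1].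
   Grouping the qubits into the first [d] and the other [n - d],
   [<psi|F (x) I|psi>] is a sum of [d]-qubit expectations [<v|F|v>], each within
   [3 |v| |v'|] of [F 1..1 1..1 |v|^2], where [v'] is [v] with its [|1..1>]
   component removed.  By Cauchy-Schwarz, for a unit vector [psi] the distance
   to the corner entry is at most [3 sqrt p], with [p] the probability that one
   of the first [d] qubits is [0].
   The amplitudes of [S_-^s |Psi>] are explicit: [s! conj(w) (sum of w^(m+1) over
   the zeros m of y)] on strings [y] with [s + 1] zeros.  Their moduli are
   invariant under the cyclic shift of the qubits, so every qubit is [0] with
   probability [(s + 1) / n], and [p <= d (s + 1) / n].  For [0 < s0],
   all [<psi_s|F (x) I|psi_s>] with [s <= s0] thus lie within
   [6 sqrt (d s0 / n)] of the corner entry. *)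

Lemma CauchySchwarz_sum (R : realDomainType) (I : finType) (f g : I -> R) :
  (\sum_i f i * g i) ^+ 2 <= (\sum_i f i ^+ 2) * (\sum_i g i ^+ 2).
Proof.
(* Lagrange's identity: the defect is half a sum of squares. *)
have lagrange : \sum_i \sum_j (f i * g j - f j * g i) ^+ 2 =
    ((\sum_i f i ^+ 2) * (\sum_i g i ^+ 2)) *+ 2 - ((\sum_i f i * g i) ^+ 2) *+ 2.
  have expand i j : (f i * g j - f j * g i) ^+ 2 =
      f i ^+ 2 * g j ^+ 2 + f j ^+ 2 * g i ^+ 2 - (f i * g i) * (f j * g j) *+ 2.
    by ring.
  under eq_bigr do under eq_bigr do rewrite expand.
  under eq_bigr do rewrite sumrB big_split /=.
  rewrite sumrB big_split /=.
  have prod_sums : \sum_i \sum_j f i ^+ 2 * g j ^+ 2 =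
      (\sum_i f i ^+ 2) * (\sum_i g i ^+ 2).
    by rewrite mulr_suml; apply: eq_bigr => i _; rewrite mulr_sumr.
  have sqr_sum : \sum_i \sum_j (f i * g i) * (f j * g j) *+ 2 =
      ((\sum_i f i * g i) ^+ 2) *+ 2.
    rewrite expr2 -mulr_natr !mulr_suml; apply: eq_bigr => i _.
    by rewrite mulr_sumr mulr_suml; apply: eq_bigr => j _; rewrite mulr_natr.
  by rewrite prod_sums exchange_big /= prod_sums sqr_sum; ring.
have : 0 <= \sum_i \sum_j (f i * g j - f j * g i) ^+ 2.
  by apply: sumr_ge0 => i _; apply: sumr_ge0 => j _; exact: sqr_ge0.
by rewrite lagrange subr_ge0 ler_pMn2r.
Qed.

Lemma CauchySchwarz_sum_sqrt (R : rcfType) (I : finType) (f g : I -> R) :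
  \sum_i f i * g i <= Num.sqrt (\sum_i f i ^+ 2) * Num.sqrt (\sum_i g i ^+ 2).
Proof.
rewrite -sqrtrM; last by apply: sumr_ge0 => i _; exact: sqr_ge0.
apply: le_trans (ler_norm _) _.
rewrite -sqrtr_sqr ler_sqrt ?CauchySchwarz_sum //.
by rewrite mulr_ge0 // sumr_ge0 // => i _; exact: sqr_ge0.
Qed.

Section ComplexModulus.
Variable R : realType.
Local Notation C := R[i].
Implicit Types a b : C.

Lemma cabs2M a b : cabs2 (a * b) = cabs2 a * cabs2 b.
Proof. by case: a b => a1 a2 [b1 b2]; rewrite /cabs2 /=; ring. Qed.

Lemma cabs2_ge0 a : 0 <= cabs2 a.
Proof. by rewrite /cabs2 addr_ge0 // sqr_ge0. Qed.

Lemma cabs2_eq0 a : (cabs2 a == 0) = (a == 0).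
Proof.
by case: a => a1 a2; rewrite /cabs2 /= paddr_eq0 ?sqr_ge0 // !sqrf_eq0 eq_complex.
Qed.

Lemma cabs20 : cabs2 (0 : C) = 0.
Proof. by rewrite /cabs2 /= expr0n /= addr0. Qed.

Lemma cabs2_cconj a : cabs2 (cconj a) = cabs2 a.
Proof. by case: a => a1 a2; rewrite /cabs2 /=; ring. Qed.

Lemma cconj0 : cconj (0 : C) = 0.
Proof. by apply/eqP; rewrite eq_complex /= oppr0 !eqxx. Qed.

Lemma cconj_mulE a : cconj a * a = (cabs2 a)%:C.
Proof.
case: a => a1 a2; rewrite /cabs2; apply/eqP.
by rewrite eq_complex /=; apply/andP; split; apply/eqP; ring.
Qed.

Lemma cmodE a : cmod a = Normc.normc a.
Proof. by case: a. Qed.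

Lemma cmod_ge0 a : 0 <= cmod a.
Proof. exact: sqrtr_ge0. Qed.

Lemma cmodD a b : cmod (a + b) <= cmod a + cmod b.
Proof. by rewrite !cmodE le_normcD. Qed.

Lemma cmodN a : cmod (- a) = cmod a.
Proof. by rewrite !cmodE normcN. Qed.

Lemma cmodB a b : cmod (a - b) <= cmod a + cmod b.
Proof. by rewrite -(cmodN b) cmodD. Qed.

Lemma cmodM a b : cmod (a * b) = cmod a * cmod b.
Proof. by rewrite !cmodE Normc.normcM. Qed.

Lemma cmod_cconj a : cmod (cconj a) = cmod a.
Proof. by rewrite /cmod cabs2_cconj. Qed.

Lemma cmod_real (r : R) : cmod r%:C = `|r|.
Proof. by rewrite /cmod /cabs2 /= expr0n /= addr0 sqrtr_sqr. Qed.

Lemma sqr_cmod a : cmod a ^+ 2 = cabs2 a.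
Proof. by rewrite /cmod sqr_sqrtr // cabs2_ge0. Qed.

Lemma cmod_sum (I : finType) (P : pred I) (f : I -> C) :
  cmod (\sum_(i | P i) f i) <= \sum_(i | P i) cmod (f i).
Proof.
elim/big_ind2: _ => [|x1 x2 y1 y2 le1 le2|//].
  by rewrite /cmod cabs20 sqrtr0.
exact: le_trans (cmodD _ _) (lerD le1 le2).
Qed.

End ComplexModulus.

Section Vectors.
Variables (R : realType) (n : nat).
Local Notation C := R[i].
Implicit Types u v w : qvec R n.

Definition sqnorm v : R := \sum_y cabs2 (v y).
Definition inner u w : C := \sum_y cconj (u y) * w y.

Lemma sqnorm_ge0 v : 0 <= sqnorm v.
Proof. by apply: sumr_ge0 => y _; exact: cabs2_ge0. Qed.

Lemma vnorm_ge0 v : 0 <= vnorm v.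
Proof. exact: sqrtr_ge0. Qed.

Lemma sqr_vnorm v : vnorm v ^+ 2 = sqnorm v.
Proof. by rewrite /vnorm sqr_sqrtr // sqnorm_ge0. Qed.

Lemma cmod_inner_le u w : cmod (inner u w) <= vnorm u * vnorm w.
Proof.
apply: le_trans (cmod_sum _ _) _.
under eq_bigr do rewrite cmodM cmod_cconj.
apply: le_trans (CauchySchwarz_sum_sqrt _ _) _.
by under eq_bigr do rewrite sqr_cmod; under [X in _ * Num.sqrt X]eq_bigr do rewrite sqr_cmod.
Qed.

Lemma cmod_entry_le v y : cmod (v y) <= vnorm v.
Proof.
rewrite /cmod /vnorm ler_sqrt ?sqnorm_ge0 // (bigD1 y) //= lerDl.
by apply: sumr_ge0 => z _; exact: cabs2_ge0.
Qed.

Lemma expect_inner (A : qop R n) v : expect A v = inner v (apply_op A v).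
Proof.
apply: eq_bigr => x _; rewrite mulr_sumr.
by apply: eq_bigr => y _; rewrite mulrA.
Qed.

End Vectors.

Definition ones d : bits d := [ffun => true].

Section OnesComponent.
Variables (R : realType) (d : nat) (F : qop R d).
Hypothesis F_contr : op_norm_le1 F.
Implicit Types v : qvec R d.

Definition ones_ket : qvec R d := fun y => if y == ones d then 1 else 0.
Definition off_ones v : qvec R d := fun y => if y == ones d then 0 else v y.

Lemma apply_op_ones_split v x :
  apply_op F v x = v (ones d) * F x (ones d) + apply_op F (off_ones v) x.
Proof.
rewrite /apply_op (bigD1 (ones d)) //= [in RHS](bigD1 (ones d)) //= /off_ones.
rewrite eqxx mulr0 add0r mulrC; congr (_ + _).
by apply: eq_bigr => y /negbTE ->.
Qed.

Lemma inner_ones_split v w :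
  inner v w = cconj (v (ones d)) * w (ones d) + inner (off_ones v) w.
Proof.
rewrite /inner (bigD1 (ones d)) //= [in RHS](bigD1 (ones d)) //= /off_ones.
rewrite eqxx cconj0 mul0r add0r; congr (_ + _).
by apply: eq_bigr => y /negbTE ->.
Qed.

Lemma sqnorm_ones_split v : sqnorm v = cabs2 (v (ones d)) + sqnorm (off_ones v).
Proof.
rewrite /sqnorm (bigD1 (ones d)) //= [in RHS](bigD1 (ones d)) //= /off_ones.
rewrite eqxx cabs20 add0r; congr (_ + _).
by apply: eq_bigr => y /negbTE ->.
Qed.

Lemma vnorm_off_ones_le v : vnorm (off_ones v) <= vnorm v.
Proof.
have le : sqnorm (off_ones v) <= sqnorm v.
  by rewrite [X in _ <= X]sqnorm_ones_split lerDr cabs2_ge0.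
by rewrite /vnorm ler_sqrt ?sqnorm_ge0.
Qed.

Lemma cmod_F_ones_le1 : cmod (F (ones d) (ones d)) <= 1.
Proof.
have F_ket x : apply_op F ones_ket x = F x (ones d).
  rewrite /apply_op (bigD1 (ones d)) //= /ones_ket eqxx mulr1 big1 ?addr0 //.
  by move=> y /negbTE ->; rewrite mulr0.
have vnorm_ket : vnorm ones_ket = 1.
  rewrite /vnorm /sqnorm (bigD1 (ones d)) //= /ones_ket eqxx big1 ?addr0.
    by rewrite /cabs2 /= expr1n expr0n /= addr0 sqrtr1.
  by move=> y /negbTE ->; rewrite cabs20.
by rewrite -F_ket -vnorm_ket; apply: le_trans (cmod_entry_le _ _) (F_contr _).
Qed.

(* Writing [v = v 1..1 |1..1> + off_ones v] leaves three error terms, each of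
   size at most [vnorm v * vnorm (off_ones v)]. *)
Lemma expect_near_ones v :
  cmod (expect F v - F (ones d) (ones d) * (sqnorm v)%:C)
    <= 3%:R * vnorm v * vnorm (off_ones v).
Proof.
set v' := off_ones v; set a := vnorm v; set b := vnorm v'.
have b_le_a : b <= a by exact: vnorm_off_ones_le.
have b_ge0 : 0 <= b by exact: vnorm_ge0.
have -> : expect F v - F (ones d) (ones d) * (sqnorm v)%:C =
    cconj (v (ones d)) * apply_op F v' (ones d) + inner v' (apply_op F v)
    - F (ones d) (ones d) * (sqnorm v')%:C.
  rewrite expect_inner inner_ones_split [apply_op F v (ones d)]apply_op_ones_split.
  by rewrite sqnorm_ones_split rmorphD /= mulrDr mulrA cconj_mulE; ring.
have bound1 : cmod (cconj (v (ones d)) * apply_op F v' (ones d)) <= a * b.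
  rewrite cmodM cmod_cconj ler_pM ?cmod_ge0 ?cmod_entry_le //.
  exact: le_trans (cmod_entry_le _ _) (F_contr _).
have bound2 : cmod (inner v' (apply_op F v)) <= a * b.
  by rewrite mulrC; apply: le_trans (cmod_inner_le _ _) _; rewrite ler_wpM2l.
have bound3 : cmod (F (ones d) (ones d) * (sqnorm v')%:C) <= a * b.
  rewrite cmodM cmod_real ger0_norm ?sqnorm_ge0 // -sqr_vnorm -/b expr2 mulrA.
  rewrite ler_wpM2r //; apply: le_trans b_le_a.
  by rewrite -[X in _ <= X]mul1r ler_wpM2r ?cmod_F_ones_le1.
apply: le_trans (cmodB _ _) _; apply: le_trans (lerD (cmodD _ _) bound3) _.
have := lerD bound1 bound2; rewrite -!mulrA; lra.
Qed.

End OnesComponent.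

Section TensorSplit.
Variables (R : realType) (n d : nat).
Hypothesis d_le_n : (d <= n)%N.

Definition drop_bits (x : bits n) : bits (n - d) :=
  [ffun k : 'I_(n - d) => if insub (d + k)%N is Some j then x j else false].

Definition join_bits (a : bits d) (b : bits (n - d)) : bits n :=
  [ffun j : 'I_n => if insub (val j) is Some i then a i
     else if insub (j - d)%N is Some k then b k else false].

Lemma restr_join a b : restr d (join_bits a b) = a.
Proof.
apply/ffunP => i; rewrite /restr !ffunE.
case: insubP => [j _ vj|]; last by rewrite (leq_trans (ltn_ord i) d_le_n).
rewrite ffunE; case: insubP => [i' _ vi'|]; last by rewrite vj ltn_ord.
by congr (a _); apply: val_inj; rewrite /= vi' vj.
Qed.

Lemma drop_join a b : drop_bits (join_bits a b) = b.
Proof.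
apply/ffunP => k; rewrite /drop_bits !ffunE.
case: insubP => [j _ vj|]; last by have := ltn_ord k; rewrite ltn_subRL => ->.
rewrite ffunE; case: insubP => [i' _ vi'|_].
  by move: (ltn_ord i'); rewrite vi' vj ltnNge leq_addr.
case: insubP => [k' _ vk'|]; last by rewrite vj addKn ltn_ord.
by congr (b _); apply: val_inj; rewrite /= vk' vj addKn.
Qed.

Lemma join_restr_drop x : join_bits (restr d x) (drop_bits x) = x.
Proof.
apply/ffunP => j; rewrite !ffunE.
case: insubP => [i _ vi|j_ge_d].
  rewrite /restr ffunE; case: insubP => [j' _ vj'|]; last by rewrite vi ltn_ord.
  by congr (x _); apply: val_inj; rewrite /= vj' vi.
have {}j_ge_d : (d <= j)%N by rewrite leqNgt.
case: insubP => [k _ vk|/negP[]]; last by move: (ltn_ord j); lia.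
rewrite /drop_bits ffunE; case: insubP => [j' _ vj'|]; last by rewrite vk subnKC // ltn_ord.
by congr (x _); apply: val_inj; rewrite /= vj' vk subnKC.
Qed.

Lemma sum_bits_split (V : nmodType) (f : bits n -> V) :
  \sum_(x : bits n) f x = \sum_(b : bits (n - d)) \sum_(a : bits d) f (join_bits a b).
Proof.
rewrite pair_bigA /= (reindex (fun p : bits (n - d) * bits d => join_bits p.2 p.1)) //=.
apply: onW_bij; exists (fun x => (drop_bits x, restr d x)) => [[b a]|x] /=.
  by rewrite restr_join drop_join.
by rewrite join_restr_drop.
Qed.

Lemma agree_above_d (x y : bits n) :
  [forall j : 'I_n, (d <= j)%N ==> (x j == y j)] = (drop_bits x == drop_bits y).
Proof.
apply/forallP/eqP => [agree|/ffunP eq_drop j].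
  apply/ffunP => k; rewrite !ffunE; case: insubP => [j _ vj|//].
  by apply/eqP; move: (agree j); rewrite vj leq_addr.
apply/implyP => j_ge_d.
have k_lt : (j - d < n - d)%N by rewrite ltn_sub2r // (leq_ltn_trans j_ge_d).
move: (eq_drop (Ordinal k_lt)); rewrite !ffunE /=.
case: insubP => [j' _ vj'|]; last by rewrite subnKC // ltn_ord.
have -> : j' = j by apply: val_inj; rewrite vj' /= subnKC.
by move=> ->.
Qed.

Lemma tensor_id_join (F : qop R d) a b a' b' :
  @tensor_id R n d F (join_bits a b) (join_bits a' b') = if b == b' then F a a' else 0.
Proof. by rewrite /tensor_id agree_above_d !drop_join !restr_join. Qed.

Definition block (psi : qvec R n) (b : bits (n - d)) : qvec R d :=
  fun a => psi (join_bits a b).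

Lemma expect_tensor_id_split (F : qop R d) psi :
  expect (@tensor_id R n d F) psi = \sum_b expect F (block psi b).
Proof.
rewrite /expect sum_bits_split; apply: eq_bigr => b _; apply: eq_bigr => a _.
rewrite sum_bits_split (bigD1 b) //= [X in _ + X]big1 ?addr0.
  by apply: eq_bigr => a' _; rewrite tensor_id_join eqxx.
move=> b' b'_neq; apply: big1 => a' _.
by rewrite tensor_id_join eq_sym (negbTE b'_neq) mulr0 mul0r.
Qed.

Definition off_ones_mass (psi : qvec R n) : R :=
  \sum_x (if restr d x == ones d then 0 else cabs2 (psi x)).

Lemma off_ones_mass_split psi : off_ones_mass psi = \sum_b sqnorm (off_ones (block psi b)).
Proof.
rewrite /off_ones_mass sum_bits_split; apply: eq_bigr => b _; apply: eq_bigr => a _.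
by rewrite restr_join /off_ones; case: ifP; rewrite ?cabs20.
Qed.

Lemma expect_tensor_id_near_ones (F : qop R d) psi : op_norm_le1 F ->
  cmod (expect (@tensor_id R n d F) psi - F (ones d) (ones d) * (sqnorm psi)%:C)
    <= 3%:R * Num.sqrt (sqnorm psi) * Num.sqrt (off_ones_mass psi).
Proof.
move=> F_contr; rewrite expect_tensor_id_split off_ones_mass_split.
rewrite [sqnorm psi]sum_bits_split rmorph_sum mulr_sumr -sumrB.
apply: le_trans (cmod_sum _ _) _.
apply: le_trans (ler_sum _ (fun b _ => expect_near_ones F_contr (block psi b))) _.
under eq_bigr do rewrite -mulrA.
rewrite -mulr_sumr -mulrA ler_wpM2l //.
apply: le_trans (CauchySchwarz_sum_sqrt _ _) _.
by under eq_bigr do rewrite sqr_vnorm; under [X in _ * Num.sqrt X]eq_bigr do rewrite sqr_vnorm.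
Qed.

End TensorSplit.

Section RootOfUnity.
Variables (R : realType) (n : nat).
Hypothesis n_gt0 : (0 < n)%N.
Local Notation w := (omega R n).

Let theta : R := 2 * pi / n%:R.

(* Found in the context by [field] below. *)
Let n_neq0 : n%:R != 0 :> R.
Proof. by rewrite pnatr_eq0 -lt0n. Qed.

Lemma omega_exp k : w ^+ k = Complex (cos (theta * k%:R)) (sin (theta * k%:R)).
Proof.
elim: k => [|k IH]; first by rewrite expr0 mulr0 cos0 sin0.
rewrite exprS IH /omega -/theta; apply/eqP; rewrite eq_complex /=.
rewrite -addn1 natrD mulrDr mulr1 cosD sinD.
by apply/andP; split; apply/eqP; ring.
Qed.

Lemma cabs2_omega_exp k : cabs2 (w ^+ k) = 1.
Proof. by rewrite omega_exp /cabs2 /= cos2Dsin2. Qed.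

Lemma cabs2_omega : cabs2 w = 1.
Proof. by rewrite -[w]expr1 cabs2_omega_exp. Qed.

Lemma omega_neq0 : w != 0.
Proof. by rewrite -cabs2_eq0 cabs2_omega oner_neq0. Qed.

Lemma omega_exp_n : w ^+ n = 1.
Proof.
have -> : w ^+ n = Complex (cos (pi *+ 2)) (sin (pi *+ 2)).
  by rewrite omega_exp /theta -mulr_natr; congr (Complex (cos _) (sin _)); field.
by rewrite cos2pi sin2pi.
Qed.

(* [cos x = 1 - 2 sin (x/2)^2] and [0 < x/2 < pi] for [x = theta * k]. *)
Lemma omega_exp_neq1 k : (0 < k < n)%N -> w ^+ k != 1.
Proof.
move=> /andP[k_gt0 k_lt_n]; rewrite omega_exp; apply/negP => /eqP [cos_eq1 _].
set x := theta * k%:R in cos_eq1.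
have half_x : 0 < x / 2 < pi.
  have x_half : x / 2 = pi * (k%:R / n%:R) by rewrite /x /theta; field.
  rewrite x_half mulr_gt0 ?pi_gt0 ?divr_gt0 ?ltr0n //=.
  by rewrite -[X in _ < X]mulr1 ltr_pM2l ?pi_gt0 // ltr_pdivrMr ?ltr0n // mul1r ltr_nat.
have := sin_gt0_pi half_x; rewrite lt0r => /andP[sin_neq0 _].
have : cos x = 1 - sin (x / 2) ^+ 2 *+ 2.
  have cos_double (y : R) : cos (y *+ 2) = 1 - sin y ^+ 2 *+ 2.
    by rewrite cos_mulr2n cos2sin2; ring.
  by rewrite -cos_double; congr cos; rewrite -mulr_natr; field.
rewrite cos_eq1 => /eqP; rewrite -subr_eq0 opprB addrC subrK.
by rewrite -mulr_natr mulf_eq0 pnatr_eq0 orbF sqrf_eq0 (negbTE sin_neq0).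
Qed.

Lemma omega_geom_neq0 k : (0 < k < n)%N -> \sum_(i < k) w ^+ i != 0.
Proof.
move=> k_range; apply: contra (omega_exp_neq1 k_range) => /eqP sum0.
by have := subrX1 w k; rewrite sum0 mulr0 => /eqP; rewrite subr_eq0.
Qed.

End RootOfUnity.

Section LoweredAmplitude.
Variables (R : realType) (n : nat).
Local Notation C := R[i].
Local Notation w := (omega R n).
Implicit Types y : bits n.

Definition zeros y : nat := (\sum_(i < n) ~~ y i)%N.
Definition phase_sum y : C := \sum_(m < n | ~~ y m) w ^+ m.+1.
Definition lowered_amp (s : nat) y : C :=
  (s`!)%:R * cconj w * (if zeros y == s.+1 then phase_sum y else 0).

Lemma setbitE y m b i : setbit y m b i = if i == m then b else y i.
Proof. by rewrite ffunE. Qed.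

Lemma zeros_setbit y m : ~~ y m -> zeros y = (zeros (setbit y m true)).+1.
Proof.
move=> ym0; rewrite /zeros (bigD1 m) //= ym0 add1n [in RHS](bigD1 m) //=.
rewrite setbitE eqxx add0n; congr S.
by apply: eq_bigr => i /negbTE i_neq; rewrite setbitE i_neq.
Qed.

Lemma zeros_eq0 y : (zeros y == 0)%N = (y == ones n).
Proof.
rewrite /zeros sum_nat_eq0; apply/forallP/eqP => [all1|->]; last by move=> i; rewrite ffunE.
by apply/ffunP => i; rewrite ffunE; move: (all1 i); case: (y i).
Qed.

Lemma phase_sum_setbit y m :
  ~~ y m -> phase_sum y = w ^+ m.+1 + phase_sum (setbit y m true).
Proof.
move=> ym0; rewrite /phase_sum (bigD1 m) //=; congr (_ + _).
by apply: eq_bigl => i; rewrite setbitE; case: eqP => [->|_]; rewrite ?andbF ?andbT.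
Qed.

Lemma sum_zero_bits_const y (c : C) : \sum_(m < n | ~~ y m) c = c *+ zeros y.
Proof. by rewrite big_mkcond /zeros -sumrMnr; apply: eq_bigr => i _; case: (y i). Qed.

Lemma Psi_amp y : @Psi R n y = lowered_amp 0 y.
Proof.
rewrite /Psi /lowered_amp fact0 mul1r; congr (_ * _).
have sigma_ones m : sigma_minus m (@all_ones R n) y =
    if ~~ y m && (zeros y == 1%N) then 1 else 0.
  rewrite /sigma_minus /all_ones; case ym: (y m) => //=.
  by rewrite (@zeros_setbit y m) ?ym // eqSS zeros_eq0.
under eq_bigr do rewrite sigma_ones.
case: (zeros y == 1%N); last by apply: big1 => i _; rewrite andbF mulr0.
rewrite /phase_sum [RHS]big_mkcond; apply: eq_bigr => i _.
by case: (y i); rewrite /= ?mulr1 ?mulr0.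
Qed.

(* A string [y] with [s + 2] zeros is reached from the [s + 2] strings with one
   zero fewer; their phase sums add up to [(s + 1) * phase_sum y]. *)
Lemma iter_S_minus_Psi s y : iter s (@S_minus R n) (@Psi R n) y = lowered_amp s y.
Proof.
elim: s y => [|s IH] y; first exact: Psi_amp.
rewrite iterS /S_minus; under eq_bigr do rewrite /sigma_minus IH.
have -> : \sum_(m < n) (if y m then 0 else lowered_amp s (setbit y m true)) =
    \sum_(m < n | ~~ y m) lowered_amp s (setbit y m true).
  by rewrite [RHS]big_mkcond; apply: eq_bigr => i _; case: (y i).
have lower m : ~~ y m -> lowered_amp s (setbit y m true) =
    (s`!)%:R * cconj w * (if zeros y == s.+2 then phase_sum y - w ^+ m.+1 else 0).
  move=> ym0; rewrite /lowered_amp (zeros_setbit ym0) eqSS (phase_sum_setbit ym0).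
  by rewrite [w ^+ _ + _]addrC addrK.
rewrite (eq_bigr _ lower) /lowered_amp.
case: eqP => [zeros_y|_]; last by rewrite !mulr0 big1.
rewrite -mulr_sumr sumrB sum_zero_bits_const zeros_y -/(phase_sum y).
by rewrite mulrS addrC addrK factS natrM; ring.
Qed.

End LoweredAmplitude.

Lemma restr_widen n d (d_le_n : (d <= n)%N) (y : bits n) (i : 'I_d) :
  restr d y i = y (widen_ord d_le_n i).
Proof.
rewrite ffunE; case: insubP => [j _ vj|]; last by rewrite (leq_trans (ltn_ord i) d_le_n).
by congr (y _); apply: val_inj.
Qed.

Section CyclicSymmetry.
Variables (R : realType) (n : nat).
Hypothesis n_gt0 : (0 < n)%N.
Local Notation w := (omega R n).
Local Notation amp := (@lowered_amp R n).
Local Notation phase_sum := (@phase_sum R n).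

Definition rot (y : bits n) : bits n := [ffun j => y (ordS j)].

Lemma rot_bij : bijective rot.
Proof.
exists (fun y : bits n => [ffun j => y (ord_pred j)] : bits n) => y.
  by apply/ffunP => j; rewrite !ffunE ord_predK.
by apply/ffunP => j; rewrite !ffunE ordSK.
Qed.

Lemma zeros_rot y : zeros (rot y) = zeros y.
Proof.
rewrite /zeros [RHS](reindex (@ordS n)); last exact: onW_bij (ordS_bij n).
by apply: eq_bigr => i _; rewrite ffunE.
Qed.

Lemma phase_sum_rot y : phase_sum (rot y) * w = phase_sum y.
Proof.
rewrite /phase_sum mulr_suml [RHS](reindex (@ordS n)); last exact: onW_bij (ordS_bij n).
apply: eq_big => [j|j _]; first by rewrite ffunE.
by rewrite [RHS]exprS /= (expr_mod _ (omega_exp_n R n_gt0)) mulrC.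
Qed.

Lemma cabs2_amp_rot s y : cabs2 (amp s (rot y)) = cabs2 (amp s y).
Proof.
rewrite /lowered_amp zeros_rot; case: (zeros y == s.+1) => //.
by rewrite !cabs2M -(phase_sum_rot y) cabs2M cabs2_omega // mulr1.
Qed.

Definition zero_mass s (i : 'I_n) : R :=
  \sum_(y : bits n) (if y i then 0 else cabs2 (amp s y)).

Lemma zero_mass_ordS s i : zero_mass s (ordS i) = zero_mass s i.
Proof.
rewrite /zero_mass [RHS](reindex rot); last exact: onW_bij rot_bij.
by apply: eq_bigr => y _; rewrite ffunE cabs2_amp_rot.
Qed.

Lemma zero_mass_const s i : zero_mass s i = zero_mass s (Ordinal n_gt0).
Proof.
case: i => k k_lt_n; elim: k k_lt_n => [|k IH] k_lt_n; first by congr zero_mass; apply: val_inj.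
have k_lt_n' : (k < n)%N by apply: ltn_trans k_lt_n.
rewrite -(IH k_lt_n') -[RHS]zero_mass_ordS; congr zero_mass; apply: val_inj.
by rewrite /= modn_small.
Qed.

(* Summing over the qubits counts every string [s + 1] times. *)
Lemma zero_mass_eq s i : zero_mass s i * n%:R = (s.+1)%:R * sqnorm (amp s).
Proof.
have sum_zero_mass : \sum_(j < n) zero_mass s j = (s.+1)%:R * sqnorm (amp s).
  rewrite /zero_mass exchange_big /sqnorm mulr_sumr; apply: eq_bigr => y _.
  have -> : \sum_(j < n) (if y j then 0 else cabs2 (amp s y)) = cabs2 (amp s y) *+ zeros y.
    by rewrite /zeros -sumrMnr; apply: eq_bigr => j _; case: (y j).
  rewrite mulr_natl; case: (eqVneq (zeros y) s.+1) => [-> //|zeros_neq].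
  by rewrite /lowered_amp (negbTE zeros_neq) mulr0 cabs20 !mul0rn.
rewrite -sum_zero_mass (eq_bigr _ (fun j _ => zero_mass_const s j)).
by rewrite sumr_const card_ord mulr_natr zero_mass_const.
Qed.

Lemma off_ones_mass_amp_le d s : (d <= n)%N ->
  off_ones_mass d (amp s) * n%:R <= (d * s.+1)%:R * sqnorm (amp s).
Proof.
move=> d_le_n.
have le_sum : off_ones_mass d (amp s) <= \sum_(i < d) zero_mass s (widen_ord d_le_n i).
  rewrite /zero_mass exchange_big; apply: ler_sum => y _.
  have term_ge0 (i : 'I_d) : 0 <= (if y (widen_ord d_le_n i) then 0 else cabs2 (amp s y)).
    by case: ifP => _ //; exact: cabs2_ge0.
  case: ifP => [_|restr_neq]; first by apply: sumr_ge0 => i _.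
  have [i yi0] : exists i : 'I_d, ~~ restr d y i.
    apply/existsP; apply: contraFT restr_neq => /existsPn all1.
    by apply/eqP/ffunP => i; rewrite [in RHS]ffunE; exact: negbNE (all1 i).
  rewrite (bigD1 i) //= -restr_widen (negbTE yi0) lerDl.
  by apply: sumr_ge0 => j _.
rewrite (eq_bigr _ (fun j _ => zero_mass_const s _)) sumr_const card_ord in le_sum.
apply: le_trans (ler_wpM2r (ler0n _ _) le_sum) _.
by rewrite -[_ *+ d]mulr_natr mulrAC zero_mass_eq natrM mulrC mulrA.
Qed.

End CyclicSymmetry.

Section NonzeroAmplitude.
Variables (R : realType) (n s : nat).
Hypothesis s_lt : (s.+1 < n)%N.
Local Notation phase_sum := (@phase_sum R n).

Definition first_zeros : bits n := [ffun j : 'I_n => (s < j)%N].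

Lemma zeros_first_zeros : zeros first_zeros = s.+1.
Proof.
have count_lt m : (\sum_(i < m) (i < s.+1 : nat))%N = minn m s.+1.
  elim: m => [|m IH]; first by rewrite big_ord0 min0n.
  by rewrite big_ord_recr /= IH; case: (ltnP m s.+1) => /=; lia.
rewrite /zeros (eq_bigr (fun i : 'I_n => (i < s.+1 : nat))%N); last first.
  by move=> i _; rewrite ffunE ltnNge negbK ltnS.
by rewrite count_lt; lia.
Qed.

(* Its phase sum is [w (1 + w + ... + w^s)], nonzero as [s + 1 < n]. *)
Lemma amp_first_zeros_neq0 : @lowered_amp R n s first_zeros != 0.
Proof.
have n_gt0 : (0 < n)%N by apply: leq_trans s_lt.
have phase : phase_sum first_zeros = omega R n * \sum_(i < s.+1) omega R n ^+ i.
  rewrite mulr_sumr (eq_bigr (fun i : 'I_s.+1 => omega R n ^+ i.+1)); last first.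
    by move=> i _; rewrite exprS.
  rewrite (big_ord_widen n (fun i => omega R n ^+ i.+1) (ltnW s_lt)).
  by apply: eq_bigl => i; rewrite ffunE /= ltnNge negbK ltnS.
rewrite /lowered_amp zeros_first_zeros eqxx phase !mulf_neq0 //.
- by rewrite -cabs2_eq0 cabs2_cconj cabs2_omega // oner_neq0.
- exact: omega_neq0.
- by apply: omega_geom_neq0; lia.
Qed.

Lemma sqnorm_amp_gt0 : 0 < sqnorm (@lowered_amp R n s).
Proof.
rewrite /sqnorm (bigD1 first_zeros) //=; apply: ltr_pwDl; last first.
  by apply: sumr_ge0 => y _; exact: cabs2_ge0.
by rewrite lt0r cabs2_eq0 amp_first_zeros_neq0 cabs2_ge0.
Qed.

End NonzeroAmplitude.

Section NormalizedState.
Variables (R : realType) (n s : nat).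
Hypothesis s_lt : (s.+1 < n)%N.
Local Notation amp := (@lowered_amp R n s).

Lemma cabs2_psi y : cabs2 (@psi R n s y) = cabs2 (amp y) / sqnorm amp.
Proof.
rewrite /psi (funext (@iter_S_minus_Psi R n s)) /vscale cabs2M mulrC.
by rewrite /cabs2 /= expr0n /= addr0 exprVn sqr_vnorm.
Qed.

Lemma sqnorm_psi : sqnorm (@psi R n s) = 1.
Proof.
rewrite /sqnorm; under eq_bigr do rewrite cabs2_psi.
by rewrite -mulr_suml divff // lt0r_neq0 // sqnorm_amp_gt0.
Qed.

Lemma off_ones_mass_psi d : (d <= n)%N ->
  off_ones_mass d (@psi R n s) <= (d * s.+1)%:R / n%:R.
Proof.
move=> d_le_n; have n_gt0 : (0 < n)%N by apply: leq_trans s_lt.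
have -> : off_ones_mass d (@psi R n s) = off_ones_mass d amp / sqnorm amp.
  rewrite /off_ones_mass mulr_suml; apply: eq_bigr => y _.
  by rewrite cabs2_psi; case: ifP; rewrite ?mul0r.
rewrite ler_pdivrMr ?sqnorm_amp_gt0 // mulrAC ler_pdivlMr ?ltr0n //.
exact: off_ones_mass_amp_le.
Qed.

End NormalizedState.

Lemma expect_psi_near_ones (R : realType) n d (F : qop R d) t :
  (t.+1 < n)%N -> (d <= n)%N -> op_norm_le1 F ->
  cmod (expect (@tensor_id R n d F) (@psi R n t) - F (ones d) (ones d))
    <= 3%:R * Num.sqrt ((d * t.+1)%:R / n%:R).
Proof.
move=> t_lt d_le_n F_contr.
have := expect_tensor_id_near_ones d_le_n (@psi R n t) F_contr.
rewrite sqnorm_psi // mulr1 sqrtr1 mulr1 => /le_trans; apply.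
by rewrite ler_wpM2l // ler_sqrt ?off_ones_mass_psi // divr_ge0.
Qed.

Lemma sqrt_ratio_succ_le (R : rcfType) (d t s0 n : nat) : (0 < s0)%N -> (t <= s0)%N ->
  Num.sqrt ((d * t.+1)%:R / n%:R) <= 2 * Num.sqrt ((d * s0)%:R / n%:R :> R).
Proof.
move=> s0_gt0 t_le.
have two : 2 = Num.sqrt (2 ^+ 2) :> R by rewrite sqrtr_sqr ger0_norm.
rewrite [in X in _ <= X]two -sqrtrM ?sqr_ge0 // ler_sqrt; last first.
  by rewrite mulr_ge0 ?sqr_ge0 ?divr_ge0.
rewrite mulrA -natrX -natrM ler_wpM2r ?invr_ge0 // ler_nat.
by rewrite mulnCA leq_mul2l; apply/orP; right; lia.
Qed.

Local Close Scope complex_scope.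

Theorem theorem7 (R : realType) :
  exists (K : R) (N : nat), 0 < K /\
    forall (n d : nat) (F : qop R d) (s0 r s : nat),
      (N <= n)%N -> (d <= n)%N ->
      op_norm_le1 F ->
      (s0 <= n - 2)%N -> (r <= s0)%N -> (s <= s0)%N ->
      cmod (expect (@tensor_id R n d F) (@psi R n s) - expect (@tensor_id R n d F) (@psi R n r))
        <= K * Num.sqrt ((d * s0)%:R / n%:R).
Proof.
exists 12%:R, 2%N; split => // n d F s0 r s n_ge2 d_le_n F_contr s0_le r_le s_le.
have [s0_eq0|s0_gt0] := posnP s0.
  have -> : s = r by lia.
  by rewrite subrr /cmod cabs20 sqrtr0 mulr_ge0 ?sqrtr_ge0.
pose dev t := expect (@tensor_id R n d F) (@psi R n t) - F (ones d) (ones d).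
have dev_le t : (t <= s0)%N -> cmod (dev t) <= 6 * Num.sqrt ((d * s0)%:R / n%:R).
  move=> t_le; have t_lt : (t.+1 < n)%N by lia.
  have := expect_psi_near_ones t_lt d_le_n F_contr.
  have := sqrt_ratio_succ_le R d n s0_gt0 t_le.
  rewrite -/(dev t); lra.
have -> : expect (@tensor_id R n d F) (@psi R n s) - expect (@tensor_id R n d F) (@psi R n r)
    = dev s - dev r by rewrite /dev opprB addrA subrK.
have := cmodB (dev s) (dev r); have := dev_le s s_le; have := dev_le r r_le; lra.
Qed.
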